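(* For all $W,L\in\mathbb N$ and $K>0$, $$\mathcal{SNN}(W,L,K)\subset\mathcal{NN}(W,L,K)\subset\mathcal{SNN}(W+1,L,K).$$
   Context: A neural network of depth $L$ is $\phi=\ell_L\circ\sigma_{L-1}\circ\ell_{L-1}\circ\cdots\circ\sigma_0\circ\ell_0$ with $\ell_i(u)=A_iu+b_i$, $A_i\in\mathbb R^{n_i\times m_i}$, $b_i\in\mathbb R^{n_i}$, $m_{i+1}=n_i$, and componentwise activation functions $\sigma_i$; width $W=\max_i n_i$. Standing convention: the activation functions satisfy $\sigma_\ell(1)=1$. With $\|A\|=\max_i\sum_j|a_{ij}|$ and $\|(A,b)\|$ the norm of the augmented matrix $[A\ b]$, $\mathcal{NN}(W,L,K)$ denotes the networks of width $W$ and depth $L$ (with fixed input and output dimensions) for which there is $I\subset\{0,\dots,L\}$ with $\|(A_\ell,b_\ell)\|\le1$ for $\ell\notin I$, $\|(A_\ell,b_\ell)\|\ge1$ for $\ell\in I$, and $\prod_{\ell\in I}\|(A_\ell,b_\ell)\|\le K$. $\mathcal{SNN}(W,L,K)$ is the subset of bias-free such networks, i.e. those with all $b_\ell=0$. *)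

From HB Require Import structures.
From mathcomp Require Import all_boot all_order all_algebra.
From mathcomp Require Import reals.
Set Implicit Arguments. Unset Strict Implicit. Unset Printing Implicit Defensive.
Import Order.TTheory GRing.Theory Num.Theory.
Local Open Scope ring_scope.

Section Nets.
Variable R : realType.

(* A network with input dimension m and output dimension n.
   [Out A b] is a single affine layer u |-> A u + b (the last layer ell_L);
   [Layer A b rest] is  rest o sigma o (u |-> A u + b). *)
Inductive net : nat -> nat -> Type :=
| Out (m n : nat) (A : 'M[R]_(n, m)) (b : 'cV[R]_n) : net m n
| Layer (m k n : nat) (A : 'M[R]_(k, m)) (b : 'cV[R]_k) (rest : net k n) : net m n.

(* depth L = number of affine layers minus one *)
Fixpoint depth m n (N : net m n) : nat :=
  match N with Out _ _ _ _ => 0%N | Layer _ _ _ _ _ r => (depth r).+1 end.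

Fixpoint width m n (N : net m n) : nat :=
  match N with Out _ n _ _ => n | Layer _ k _ _ _ r => maxn k (width r) end.

Definition augnorm m n (A : 'M[R]_(n, m)) (b : 'cV[R]_n) : R :=
  \big[Num.max/0]_(i < n) (\sum_(j < m) `|A i j| + `|b i ord0|).

Fixpoint norms m n (N : net m n) : seq R :=
  match N with
  | Out _ _ A b => [:: augnorm A b]
  | Layer _ _ _ A b r => augnorm A b :: norms r
  end.

Definition lnorm m n (N : net m n) (l : nat) : R := nth 0 (norms N) l.

Fixpoint biasfree m n (N : net m n) : Prop :=
  match N with
  | Out _ _ _ b => b = 0
  | Layer _ _ _ _ b r => b = 0 /\ biasfree r
  end.

Fixpoint realize_from (sigma : nat -> R -> R) (l : nat) m n (N : net m n)
  : 'cV[R]_m -> 'cV[R]_n :=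
  match N in net m n return 'cV[R]_m -> 'cV[R]_n with
  | Out _ _ A b => fun u => A *m u + b
  | Layer _ _ _ A b r =>
      fun u => realize_from sigma l.+1 r (map_mx (sigma l) (A *m u + b))
  end.

Definition realize (sigma : nat -> R -> R) m n (N : net m n) := realize_from sigma 0 N.

Definition in_NN (W L : nat) (K : R) m n (N : net m n) : Prop :=
  (width N <= W)%N /\ depth N = L /\
  exists I : {set 'I_L.+1},
    (forall l : 'I_L.+1, l \notin I -> lnorm N l <= 1) /\
    (forall l : 'I_L.+1, l \in I -> 1 <= lnorm N l) /\
    \prod_(l in I) lnorm N l <= K.

Definition in_SNN (W L : nat) (K : R) m n (N : net m n) : Prop :=
  in_NN W L K N /\ biasfree N.

End Nets.

From HB Require Import structures.
From mathcomp Require Import all_boot all_order all_algebra.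
From mathcomp Require Import reals.
Import Order.TTheory GRing.Theory Num.Theory.
Local Open Scope ring_scope.

(* Append a constant coordinate 1 to the input and replace each hidden layer
   (A, b) by the bias-free layer [A b; 0 1], which maps (u; 1) to
   (A u + b; 1); the activation preserves the constant coordinate because
   sigma_l 1 = 1, and the output layer becomes [A b].  This adds one unit of
   width, and the norm of each new hidden layer is max (||(A, b)||, 1), so
   the layers in I keep their norms and the others keep norm at most 1. *)

Lemma bigmax_split_ord (R : realDomainType) (x : R) m n (F : 'I_(m + n) -> R) :
  \big[Num.max/x]_(i < m + n) F i =
  Num.max (\big[Num.max/x]_(i < m) F (lshift n i))
          (\big[Num.max/x]_(i < n) F (rshift m i)).
Proof.
have -> : index_enum 'I_(m + n) =
    [seq lshift n i | i <- index_enum 'I_m] ++ [seq rshift m i | i <- index_enum 'I_n].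
  apply: (inj_map val_inj); rewrite map_cat -!map_comp (map_comp (addn m)) /=.
  by rewrite ![index_enum _]unlock unlock !val_ord_enum -iotaDl addn0 iotaD.
by rewrite big_cat_idem ?big_map //; exact: maxxx.
Qed.

Section AugmentedNorm.
Variable R : realType.

Lemma augnorm_col_mx m n1 n2 (A1 : 'M[R]_(n1, m)) (A2 : 'M[R]_(n2, m))
    (b1 : 'cV[R]_n1) (b2 : 'cV[R]_n2) :
  augnorm (col_mx A1 A2) (col_mx b1 b2) = Num.max (augnorm A1 b1) (augnorm A2 b2).
Proof.
rewrite /augnorm bigmax_split_ord; congr Num.max; apply: eq_bigr => i _.
- by rewrite col_mxEu; congr (_ + _); apply: eq_bigr => j _; rewrite col_mxEu.
- by rewrite col_mxEd; congr (_ + _); apply: eq_bigr => j _; rewrite col_mxEd.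
Qed.

Lemma augnorm_row_mx0 m n (A : 'M[R]_(n, m)) (b : 'cV[R]_n) :
  augnorm (row_mx A b) 0 = augnorm A b.
Proof.
apply: eq_bigr => i _.
rewrite big_split_ord /= big_ord1 row_mxEr mxE normr0 addr0.
by congr (_ + _); apply: eq_bigr => j _; rewrite row_mxEl.
Qed.

Lemma augnorm_bias1 m : augnorm (0 : 'M[R]_(1, m)) 1%:M = 1.
Proof.
rewrite /augnorm big_ord_recl big_ord0 big1 => [|j _]; last by rewrite mxE normr0.
by rewrite add0r mxE eqxx normr1 max_l ?ler01.
Qed.

Lemma augnorm_bias_block m k (A : 'M[R]_(k, m)) (b : 'cV[R]_k) :
  augnorm (block_mx A b 0 1%:M) 0 = Num.max (augnorm A b) 1.
Proof.
by rewrite -(@col_mx0 _ k 1 1) augnorm_col_mx !augnorm_row_mx0 augnorm_bias1.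
Qed.

End AugmentedNorm.

Section AbsorbBias.
Variable R : realType.
Set Implicit Arguments.

Fixpoint absorb_bias m n (N : net R m n) : net R (m + 1) n :=
  match N in net _ m n return net R (m + 1) n with
  | Out m n A b => Out (row_mx A b) 0
  | Layer m k n A b r =>
      Layer (block_mx A b 0 1%:M) 0 (absorb_bias r)
  end.

Lemma realize_from_absorb_bias (sigma : nat -> R -> R)
    (sigma1 : forall l, sigma l 1 = 1) m n (N : net R m n) l u :
  realize_from sigma l (absorb_bias N) (col_mx u 1%:M) = realize_from sigma l N u.
Proof.
elim: N l u => [m' n' A b | m' k n' A b r IH] l u /=.
  by rewrite mul_row_col mulmx1 addr0.
have sigma_one : map_mx (sigma l) (1%:M : 'M[R]_1) = 1%:M.
  by apply/matrixP => i j; rewrite !mxE !ord1 eqxx sigma1.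
by rewrite mul_block_col mul0mx add0r !mulmx1 addr0 map_col_mx sigma_one IH.
Qed.

Lemma biasfree_absorb_bias m n (N : net R m n) : biasfree (absorb_bias N).
Proof. by elim: N => //= m' k n' A b r IH; split. Qed.

Lemma depth_absorb_bias m n (N : net R m n) : depth (absorb_bias N) = depth N.
Proof. by elim: N => //= m' k n' A b r ->. Qed.

Lemma width_absorb_bias m n (N : net R m n) :
  (width (absorb_bias N) <= (width N).+1)%N.
Proof.
elim: N => //= m' k n' A b r IH.
by rewrite geq_max (leq_trans IH) ?ltnS ?leq_maxr // andbT addn1 ltnS leq_maxl.
Qed.

Lemma lnorm_absorb_bias m n (N : net R m n) l :
  lnorm (absorb_bias N) l =
  if (l < depth N)%N then Num.max (lnorm N l) 1 else lnorm N l.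
Proof.
elim: N l => [m' n' A b | m' k n' A b r IH] [|l] //=; rewrite /lnorm /=.
- exact: augnorm_row_mx0.
- exact: augnorm_bias_block.
- exact: IH.
Qed.

Lemma lnorm_absorb_bias_le1 m n (N : net R m n) l :
  lnorm N l <= 1 -> lnorm (absorb_bias N) l <= 1.
Proof.
by move=> le1; rewrite lnorm_absorb_bias; case: ifP => _; rewrite ?ge_max le1 ?lexx.
Qed.

Lemma lnorm_absorb_bias_ge1 m n (N : net R m n) l :
  1 <= lnorm N l -> lnorm (absorb_bias N) l = lnorm N l.
Proof.
by move=> ge1; rewrite lnorm_absorb_bias; case: ifP => // _; rewrite max_l.
Qed.

Lemma in_NN_absorb_bias W L (K : R) m n (N : net R m n) :
  in_NN W L K N -> in_NN W.+1 L K (absorb_bias N).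
Proof.
move=> [leW [depthL [I [outI [inI prodI]]]]].
split; first by apply: leq_trans (width_absorb_bias N) _; rewrite ltnS.
split; first by rewrite depth_absorb_bias.
exists I; split=> [l /outI /lnorm_absorb_bias_le1 //|].
have keepI l : l \in I -> lnorm (absorb_bias N) l = lnorm N l.
  by move/inI; apply: lnorm_absorb_bias_ge1.
split=> [l lI|]; first by rewrite keepI ?inI.
by rewrite (eq_bigr _ keepI).
Qed.

End AbsorbBias.

Theorem proposition1 (R : realType) (sigma : nat -> R -> R)
  (sigma1 : forall l : nat, sigma l 1 = 1)
  (d k W L : nat) (K : R) (HK : 0 < K) :
  (forall N : net R d k, in_SNN W L K N -> in_NN W L K N) /\
  (forall N : net R d k, in_NN W L K N ->
     exists N' : net R (d + 1) k,
       in_SNN W.+1 L K N' /\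
       forall x : 'cV[R]_d, realize sigma N' (col_mx x 1%:M) = realize sigma N x).
Proof.
split=> [N [] // | N NN_N].
exists (absorb_bias N); split.
  by split; [exact: in_NN_absorb_bias | exact: biasfree_absorb_bias].
by move=> x; apply: realize_from_absorb_bias.
Qed.
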